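(* Let $n$ be an odd positive integer and $(\lambda\mid\mu)$ a bipartition of $n$. Then \[\Gamma^B_{(\lambda\mid\mu)}=\begin{cases}2\,\Gamma^D_{(\lambda\mid\mu)} & \ell(\mu)\text{ even},\\ 0 & \ell(\mu)\text{ odd}.\end{cases}\] Consequently $s_n^B=2s_n^D$.
   Context: $B_n$ is the group of permutations $w$ of $\{\pm1,\dots,\pm n\}$ with $w(-i)=-w(i)$, and $D_n=\{w\in B_n:w(1)\cdots w(n)>0\}$. Each $w\in B_n$ decomposes uniquely into positive cycles $(a_1,\dots,a_\ell)(-a_1,\dots,-a_\ell)$ and negative cycles $(b_1,\dots,b_\ell,-b_1,\dots,-b_\ell)$; its cycle type is the bipartition $(\lambda\mid\mu)$ of positive and negative cycle lengths, and conjugacy classes of $B_n$ are indexed by bipartitions of $n$. An element lies in $D_n$ iff $\ell(\mu)$ (the number of parts of $\mu$) is even; for $n$ odd, the $B_n$-class of each such $(\lambda\mid\mu)$ is a single $D_n$-conjugacy class. $\Gamma^B_{(\lambda\mid\mu)}$ (resp. $\Gamma^D_{(\lambda\mid\mu)}$) is the sum of the column of the complex character table of $B_n$ (resp. $D_n$) at the class of cycle type $(\lambda\mid\mu)$; $s_n^B$, $s_n^D$ are the sums of all entries of the character tables of $B_n$, $D_n$. *)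

From HB Require Import structures.
From mathcomp Require Import all_boot all_order all_algebra all_fingroup all_solvable all_field all_character.
Set Implicit Arguments. Unset Strict Implicit. Unset Printing Implicit Defensive.


(* The signed set {+-1,...,+-n} is encoded as bool * 'I_n :
   (false, i) stands for  +(i+1)  and  (true, i) stands for  -(i+1). *)
Notation sT n := (bool * 'I_n)%type.

Definition negT n (x : sT n) : sT n := (~~ x.1, x.2).

Definition Bset n : {set {perm sT n}} :=
  [set w : {perm sT n} | [forall x, w (negT x) == negT (w x)]].

Lemma group_set_B n : group_set (Bset n).
Proof.
apply/group_setP; split.
  by rewrite inE; apply/forallP => x; rewrite !perm1.
move=> x y; rewrite !inE => /forallP Hx /forallP Hy; apply/forallP => z.
by rewrite !permM (eqP (Hx z)) (eqP (Hy _)).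
Qed.

Definition Bn n : {group {perm sT n}} := Group (group_set_B n).

(* the sign of w(1)...w(n) : true iff an odd number of the w(i) are negative *)
Definition sgnB n (w : {perm sT n}) : bool :=
  \big[addb/false]_(i < n) (w (false, i)).1.

Lemma sgnB1 n : sgnB (1%g : {perm sT n}) = false.
Proof. by rewrite /sgnB big1 // => i _; rewrite perm1. Qed.

Lemma sgnBM n (w v : {perm sT n}) : w \in Bset n -> v \in Bset n ->
  sgnB (w * v)%g = sgnB w (+) sgnB v.
Proof.
rewrite !inE => /forallP Hw /forallP Hv.
have E i : ((w * v)%g (false, i)).1 =
           (w (false, i)).1 (+) (v (false, (w (false, i)).2)).1.
  rewrite permM; case: (w (false, i)) => [[] j] //=.
  by have := eqP (Hv (false, j)); rewrite /negT /= => ->.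
rewrite /sgnB (eq_bigr _ (fun i _ => E i)) big_split /=; congr addb.
have inj : injective (fun i : 'I_n => (w (false, i)).2).
  move=> i j /= eij.
  have [e1|n1] := eqVneq (w (false, i)).1 (w (false, j)).1.
    have : w (false, i) = w (false, j).
      by move: e1 eij; case: (w (false, i)) => a b; case: (w (false, j)) => c d /= -> ->.
    by move/perm_inj => [].
  have : w (false, i) = w (true, j).
    have -> : (true, j) = negT (false, j) by [].
    rewrite (eqP (Hw _)); move: n1 eij; rewrite /negT.
    by case: (w (false, i)) => a b; case: (w (false, j)) => c d /= + ->; case: a; case: c.
  by move/perm_inj.
by rewrite [RHS](reindex_inj inj).
Qed.

Definition Dset n : {set {perm sT n}} := [set w in Bset n | ~~ sgnB w].

Lemma group_set_D n : group_set (Dset n).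
Proof.
apply/group_setP; split.
  by rewrite inE (group1 (Bn n)) sgnB1.
move=> x y /setIdP [Bx sx] /setIdP [By sy]; apply/setIdP; split.
  exact: (@groupM _ (Bn n) x y Bx By).
by rewrite sgnBM // (negbTE sx) (negbTE sy).
Qed.

Definition Dn n : {group {perm sT n}} := Group (group_set_D n).

(* An orbit X with -X = X is a negative cycle (b_1..b_l,-b_1..-b_l)
   of length #|X|/2; otherwise X and -X form one positive cycle of length #|X|.
   Of the pair {X, -X} we keep the orbit containing the positive letter of
   smallest absolute value occurring in X (exactly one of X, -X does). *)
Definition negclosed n (X : {set sT n}) : bool := (@negT n) @: X == X.

Definition chosen_rep n (X : {set sT n}) : bool :=
  [exists x in X, (x.1 == false) && [forall y in X, (x.2 <= y.2)%N]].

Definition posCycles n (w : {perm sT n}) : seq nat :=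
  sort geq [seq #|X| | X : {set sT n} <- enum (porbits w) & ~~ negclosed X && chosen_rep X].

Definition negCycles n (w : {perm sT n}) : seq nat :=
  sort geq [seq (#|X| %/ 2)%N | X : {set sT n} <- enum (porbits w) & negclosed X].

Definition is_partition (l : seq nat) : bool := sorted geq l && all (fun k => 0 < k)%N l.

Definition is_bipartition n (lam mu : seq nat) : bool :=
  [&& is_partition lam, is_partition mu & sumn lam + sumn mu == n].

Definition typeClass n (lam mu : seq nat) : {set {perm sT n}} :=
  [set w in Bn n | (posCycles w == lam) && (negCycles w == mu)].

Local Open Scope ring_scope.

Definition colSum (gT : finGroupType) (G : {group gT}) (x : gT) : algC :=
  \sum_(i : Iirr G) 'chi[G]_i x.

Definition tableSum (gT : finGroupType) (G : {group gT}) : algC :=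
  \sum_(xG in classes G) colSum G (repr xG).

(* Gamma^B_(lam|mu), and Gamma^D_(lam|mu) (for n odd the B_n-class is a single
   D_n-class, evaluated at a representative of it) *)
Definition GammaB n (lam mu : seq nat) : algC := colSum (Bn n) (repr (typeClass n lam mu)).
Definition GammaD n (lam mu : seq nat) : algC := colSum (Dn n) (repr (typeClass n lam mu)).

From mathcomp Require Import all_boot all_order all_algebra all_fingroup all_solvable all_field all_character.
From mathcomp Require Import zify.
Set Implicit Arguments. Unset Strict Implicit. Unset Printing Implicit Defensive.

(* For odd n the central element -1 = negperm n of B_n flips the sign of the
   product w(1)...w(n), so B_n = D_n x <-1>.  Irreducible characters of a
   direct product are products, hence so are column sums, and the column sums
   of the abelian factor <-1> are 2 at 1 and 0 at -1: Gamma^B vanishes off D_n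
   and is 2 Gamma^D on D_n.  As -1 is central, a B_n-class meeting D_n is a
   single D_n-class, which gives s^B = 2 s^D.
   Membership in D_n is read off the cycle type: writing w as a permutation of
   the absolute values followed by sign changes shows that sgnB w is the
   signature of w as a permutation of the 2n signed letters, i.e. the parity of
   its number of cycles, and the cycles X <> -X come in pairs.  Every
   bipartition (lam | mu) does occur: cycle consecutive blocks of lengths
   lam ++ mu, changing sign at the wrap-around in the blocks of mu. *)

Import GroupScope GRing.Theory.

Section ColumnSums.
Variable gT : finGroupType.
Local Open Scope ring_scope.

Lemma colSum_abelian (G : {group gT}) x :
  abelian G -> colSum G x = #|G|%:R *+ (x == 1%g).
Proof.
move=> /char_abelianP linG; rewrite -cfRegE cfReg_sum sum_cfunE.
by apply: eq_bigr => i _; rewrite cfunE lin_char1 ?mul1r.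
Qed.

Variables G K H : {group gT}.
Hypothesis defG : K \x H = G.

Lemma colSum_dprod k h : k \in K -> h \in H ->
  colSum G (k * h)%g = colSum K k * colSum H h.
Proof.
move=> Kk Hh; rewrite /colSum mulr_suml.
rewrite (reindex (dprod_Iirr defG)) /=; last first.
  by exists (inv_dprod_Iirr defG) => i _; rewrite ?dprod_IirrK ?inv_dprod_IirrK.
rewrite -(pair_bigA _ (fun i j => 'chi_(dprod_Iirr defG (i, j)) (k * h)%g)).
apply: eq_bigr => i _; rewrite mulr_sumr; apply: eq_bigr => j _.
by rewrite dprod_IirrE cfDprodE.
Qed.

Lemma colSum_dprod_abelian x : abelian H -> x \in G ->
  colSum G x = if x \in K then #|H|%:R * colSum K x else 0.
Proof.
move=> abH Gx; have [k [h [Kk Hh -> uniq_kh]]] := mem_dprod defG Gx.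
rewrite colSum_dprod // (colSum_abelian _ abH) mulrC.
have [-> | nt_h] := eqVneq h 1%g; first by rewrite mulg1 Kk.
suff /negPf-> : (k * h)%g \notin K by rewrite mul0r.
apply: contra nt_h => Kkh; apply/eqP.
by have [_ <-] := uniq_kh _ _ Kkh (group1 H) (esym (mulg1 _)).
Qed.

Lemma class_dprodl x : x \in K -> x ^: G = x ^: K.
Proof.
have [_ defKH cKH _] := dprodP defG.
move=> Kx; apply/setP => y; apply/imsetP/imsetP => [[g] | [k Kk ->]]; last first.
  by exists k => //; rewrite -defKH -[k]mulg1 mem_mulg.
rewrite -defKH => /mulsgP[k h Kk Hh ->] ->; exists k => //.
have Kxk : (x ^ k)%g \in K by rewrite groupJ.
by rewrite conjgM [in LHS]conjgE -(centsP cKH h Hh _ Kxk) mulKg.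
Qed.

Lemma tableSum_dprod_abelian : abelian H -> tableSum G = #|H|%:R * tableSum K.
Proof.
move=> abH; have sKG : K \subset G by have [_ <- _ _] := dprodP defG; exact: mulG_subl.
rewrite /tableSum mulr_sumr.
rewrite (eq_bigr (fun C => if repr C \in K then #|H|%:R * colSum K (repr C) else 0));
  last by move=> C /repr_classesP[GC _]; rewrite colSum_dprod_abelian.
(* the classes of G with a representative in K are exactly the classes of K *)
rewrite -big_mkcondr; apply: eq_bigl => C.
apply/andP/repr_classesP => [[/repr_classesP[_ defC] KC] | [KC defC]].
  by rewrite -class_dprodl.
by split=> //; apply/repr_classesP; rewrite (subsetP sKG) ?class_dprodl.
Qed.

End ColumnSums.

Lemma card_even_involution (T : finType) (f : T -> T) (A : {set T}) :
  {in A, forall x, [/\ f x \in A, f (f x) = x & f x != x]} -> ~~ odd #|A|.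
Proof.
have [k] := ubnP #|A|; elim: k A => // k IHk A /ltnSE leAk fA.
have [-> | [x Ax]] := set_0Vmem A; first by rewrite cards0.
have [Afx ffx fxx] := fA x Ax.
have Afx' : f x \in A :\ x by rewrite !inE fxx.
rewrite (cardsD1 x) Ax (cardsD1 (f x)) Afx' /= add0n negbK.
apply: IHk => [| y yA]; first by move: leAk; rewrite (cardsD1 x) Ax (cardsD1 (f x)) Afx'; lia.
move: yA; rewrite !inE => /andP[yfx /andP[yx Ay]]; have [Afy ffy fyy] := fA y Ay.
split => //; rewrite Afy andbT; apply/andP; split.
- by apply: contra_neq yx => fyfx; rewrite -ffy fyfx ffx.
- by apply: contra_neq yfx => fyx; rewrite -ffy fyx.
Qed.

Lemma porbit_subset (T : finType) (s : {perm T}) (A : {set T}) x :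
  x \in A -> {in A, forall y, s y \in A} -> porbit s x \subset A.
Proof.
move=> Ax sA; apply/subsetP => _ /porbitP[k ->].
by elim: k => [|k IHk]; rewrite ?expg0 ?perm1 // expgSr permM sA.
Qed.

Lemma sort_geq_eq (s l : seq nat) : perm_eq s l -> sorted geq l -> sort geq s = l.
Proof.
move=> eq_sl sorted_l; have geq_trans : transitive geq by move=> ? ? ? /= ? ?; lia.
have geq_anti : antisymmetric geq by move=> ? ? /= ?; lia.
apply: (sorted_eq geq_trans geq_anti) => //; last by rewrite perm_sort.
by apply: sort_sorted => ? ?; apply: leq_total.
Qed.

Section Hyperoctahedral.
Variable n : nat.

Lemma negTK : involutive (@negT n).
Proof. by case=> e i; rewrite /negT /= negbK. Qed.

Lemma negT_eq_abs (x y : sT n) : x.2 = y.2 -> x = y \/ x = negT y.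
Proof. by case: x y => [e i] [e' i'] /= ->; case: e; case: e'; [left|right|right|left]. Qed.

Definition negperm : {perm sT n} := perm (can_inj negTK).

Lemma negpermE x : negperm x = negT x.
Proof. by rewrite permE. Qed.

Lemma BnP (w : {perm sT n}) : reflect (forall x, w (negT x) = negT (w x)) (w \in Bn n).
Proof. by rewrite inE; apply: (iffP forallP) => wN x; apply/eqP. Qed.

Lemma negperm_Bn : negperm \in Bn n.
Proof. by apply/BnP => x; rewrite !negpermE. Qed.

Lemma negperm_cent : Bn n \subset 'C[negperm].
Proof. by apply/subsetP => w /BnP wN; apply/cent1P/permP => x; rewrite !permM !negpermE wN. Qed.

Lemma negpermK : negperm * negperm = 1.
Proof. by apply/permP => x; rewrite permM !negpermE negTK perm1. Qed.

Lemma sgnB_negperm : sgnB negperm = odd n.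
Proof.
rewrite /sgnB (eq_bigr (fun => true)) => [|i _]; last by rewrite negpermE.
by rewrite big_const_ord; elim: n => //= k ->.
Qed.

Lemma Dn_sub_Bn : Dn n \subset Bn n.
Proof. by apply/subsetP => w; rewrite inE => /andP[]. Qed.

Lemma inDn (w : {perm sT n}) : (w \in Dn n) = (w \in Bn n) && ~~ sgnB w.
Proof. by rewrite inE. Qed.

Lemma Bn_abs_inj (w : {perm sT n}) : w \in Bn n -> injective (fun i => (w (false, i)).2).
Proof.
move=> /BnP wN i j /negT_eq_abs[/perm_inj[] // | ].
by rewrite -wN => /perm_inj.
Qed.

Hypothesis n_odd : odd n.

Lemma order_negperm : #[negperm] = 2.
Proof.
apply: nt_prime_order => //; first by rewrite expgS expg1 negpermK.
have n_gt0 : 0 < n by case: n n_odd.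
by apply/eqP => /permP/(_ (false, Ordinal n_gt0)); rewrite negpermE perm1.
Qed.

Lemma Bn_dprod : Dn n \x <[negperm]> = Bn n.
Proof.
have sgn_mul_negperm w : w \in Bn n -> sgnB (w * negperm) = ~~ sgnB w.
  by move=> Bw; rewrite sgnBM ?negperm_Bn // sgnB_negperm n_odd addbT.
have negperm_notD : negperm \notin Dn n.
  by rewrite inDn sgnB_negperm n_odd andbF.
rewrite dprodE.
- apply/eqP; rewrite eqEsubset mulG_subG Dn_sub_Bn cycle_subG negperm_Bn /=.
  apply/subsetP => w Bw; have [sw | sw] := boolP (sgnB w).
    have -> : w = (w * negperm) * negperm by rewrite -mulgA negpermK mulg1.
    rewrite mem_mulg ?cycle_id //.
    by rewrite inDn groupM ?negperm_Bn //= sgn_mul_negperm ?sw.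
  by rewrite -(mulg1 w) mem_mulg ?inDn ?Bw.
- by rewrite cycle_subG -sub_cent1 (subset_trans Dn_sub_Bn negperm_cent).
- by rewrite setIC prime_TIg -?orderE ?order_negperm // cycle_subG.
Qed.

End Hyperoctahedral.

Section SignedPermutationParity.
Variable n : nat.

Lemma abs_perm_inj (p : {perm 'I_n}) : injective (fun x : sT n => (x.1, p x.2)).
Proof. by move=> [e i] [e' i'] [-> /perm_inj->]. Qed.

Definition absperm (p : {perm 'I_n}) : {perm sT n} := perm (@abs_perm_inj p).

Lemma abspermE p x : absperm p x = (x.1, p x.2).
Proof. by rewrite permE. Qed.

Lemma abspermM : {morph absperm : p q / p * q}.
Proof. by move=> p q; apply/permP => x; rewrite permM !abspermE permM. Qed.

Lemma absperm1 : absperm 1 = 1.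
Proof. by apply/permP => x; rewrite abspermE !perm1; case: x. Qed.

Lemma absperm_tperm a b :
  absperm (tperm a b) = tperm (false, a) (false, b) * tperm (true, a) (true, b).
Proof.
apply/permP => -[e i]; rewrite permM abspermE /=.
have tpermD_sign s (j k l : 'I_n) : tperm (s, j) (s, k) (~~ s, l) = (~~ s, l).
  by rewrite tpermD // xpair_eqE; case: s.
case: e; case: (tpermP a b i) => [->|->|/eqP ia /eqP ib];
  rewrite ?tpermL ?tpermR ?(tpermD_sign false) ?(tpermD_sign true) ?tpermL ?tpermR //.
all: by rewrite !tpermD // xpair_eqE ?(eq_sym a) ?(eq_sym b) ?(negPf ia) ?(negPf ib) andbF.
Qed.

Lemma odd_absperm p : odd_perm (absperm p) = false.
Proof.
have [ts -> _] := prod_tpermP p.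
rewrite (big_morph absperm abspermM absperm1).
rewrite (big_morph (@odd_perm _) (@odd_permM _) (odd_perm1 _)) big1 // => t _.
by rewrite absperm_tperm odd_permM !odd_tperm !xpair_eqE /= addbb.
Qed.

Definition signflip (c : 'I_n -> bool) : {perm sT n} :=
  \prod_(i < n) (if c i then tperm (false, i) (true, i) else 1).

Lemma signflipE c x : signflip c x = (x.1 (+) c x.2, x.2).
Proof.
suff flip_seq r : uniq r ->
    (\prod_(i <- r) (if c i then tperm (false, i) (true, i) else 1)) x
    = (x.1 (+) (c x.2 && (x.2 \in r)), x.2).
  by rewrite /signflip flip_seq ?index_enum_uniq // mem_index_enum andbT.
case: x => e i /=; elim: r e => [|j r IHr] e; first by rewrite big_nil perm1 andbF addbF.
rewrite big_cons permM inE => /andP[jr r_uniq].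
have [ij | ij] := eqVneq i j; rewrite /= ?orbT ?orbF.
  by subst j; case: (c i); case: e; rewrite ?tpermL ?tpermR ?perm1 IHr // (negPf jr) andbF.
rewrite -IHr //; congr (_ _); case: (c j); rewrite ?perm1 //.
by rewrite tpermD // xpair_eqE (eq_sym j) (negPf ij) andbF.
Qed.

Lemma odd_signflip c : odd_perm (signflip c) = \big[addb/false]_(i < n) c i.
Proof.
rewrite (big_morph (@odd_perm _) (@odd_permM _) (odd_perm1 _)); apply: eq_bigr => i _.
by case: (c i); rewrite ?odd_perm1 // odd_tperm xpair_eqE.
Qed.

Lemma odd_perm_Bn w : w \in Bn n -> odd_perm w = sgnB w.
Proof.
move=> Bw; have /BnP wN := Bw.
pose p := perm (Bn_abs_inj Bw); pose c j := (w (false, p^-1 j)).1.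
have Ew : w = absperm p * signflip c.
  apply/permP => -[e i]; rewrite permM abspermE signflipE /c permK permE /=.
  case: e; last by case: (w (false, i)).
  by rewrite -[(true, i)]/(negT (false, i)) wN; case: (w (false, i)).
rewrite {1}Ew odd_permM odd_absperm odd_signflip /sgnB (reindex_inj (@perm_inj _ p)).
by apply: eq_bigr => i _; rewrite /c permK.
Qed.

End SignedPermutationParity.

Section CycleParity.
Variable n : nat.

Lemma porbit_negT (w : {perm sT n}) x : w \in Bn n ->
  (@negT n) @: porbit w x = porbit w (negT x).
Proof.
move=> Bw; have wkN k y : (w ^+ k) (negT y) = negT ((w ^+ k) y).
  by have /BnP := groupX k Bw; apply.
apply/setP => y; apply/imsetP/porbitP => [[z /porbitP[k ->] ->] | [k ->]].
  by exists k; rewrite wkN.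
by exists ((w ^+ k) x); rewrite ?mem_porbit ?wkN.
Qed.

Lemma odd_perm_negclosed (w : {perm sT n}) : w \in Bn n ->
  odd_perm w = odd #|[set X in porbits w | negclosed X]|.
Proof.
move=> Bw; rewrite /odd_perm card_prod card_bool card_ord mul2n odd_double /=.
rewrite -(cardsID [set X | negclosed X] (porbits w)) oddD.
suff /negPf-> : ~~ odd #|porbits w :\: [set X | negclosed X]|.
  by rewrite addbF; congr (odd _); apply: eq_card => X; rewrite !inE andbC.
apply: (@card_even_involution _ (fun X : {set sT n} => (@negT n) @: X)
                                (porbits w :\: [set X | negclosed X])).
move=> _ /setDP[/imsetP[x _ ->]]; rewrite inE /negclosed !porbit_negT // negTK.
move=> ncX; split => //; rewrite !inE imset_f //= /negclosed porbit_negT //.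
by rewrite negTK eq_sym andbT.
Qed.

Lemma sgnB_negCycles (w : {perm sT n}) : w \in Bn n ->
  sgnB w = odd (size (negCycles w)).
Proof.
move=> Bw; rewrite -odd_perm_Bn // odd_perm_negclosed // /negCycles.
rewrite size_sort size_map size_filter -size_filter -(card_uniqP _); last first.
  by rewrite filter_uniq ?enum_uniq.
by congr odd; apply: eq_card => X; rewrite mem_filter mem_enum !inE andbC.
Qed.

End CycleParity.

Definition block_start (L : seq nat) b := sumn (take b L).

Fixpoint block_of (L : seq nat) i :=
  if L is k :: L' then if i < k then 0 else (block_of L' (i - k)).+1 else 0.

Definition block_last L i :=
  i.+1 == block_start L (block_of L i) + nth 0 L (block_of L i).

Definition block_succ L i :=
  if block_last L i then block_start L (block_of L i) else i.+1.

Section Blocks.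
Variable L : seq nat.

Lemma block_ofP i : i < sumn L ->
  let b := block_of L i in
  b < size L /\ block_start L b <= i < block_start L b + nth 0 L b.
Proof.
elim: L i => [|k L' IHL] i //= iL.
have [ik | ki] := ltnP i k; first by rewrite /block_start take0.
have [bL /andP[le_start lt_end]] := IHL (i - k) ltac:(lia).
by rewrite /block_start /= in le_start lt_end *; lia.
Qed.

Lemma block_of_offset b r : b < size L -> r < nth 0 L b ->
  block_of L (block_start L b + r) = b.
Proof.
elim: L b => [|k L' IHL] [|b] //= bL rb; first by rewrite /block_start take0 rb.
by rewrite /block_start /= -addnA ifN ?addKn ?IHL //; lia.
Qed.

Lemma block_of_start b : b < size L -> 0 < nth 0 L b -> block_of L (block_start L b) = b.
Proof. by move=> bL; rewrite -{1}[block_start L b]addn0; apply: block_of_offset. Qed.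

Lemma block_offsetP i : i < sumn L ->
  exists2 b, b < size L & exists2 r, r < nth 0 L b & i = block_start L b + r.
Proof.
move=> /block_ofP[bL /andP[le_i lt_i]]; exists (block_of L i) => //.
by exists (i - block_start L (block_of L i)); lia.
Qed.

Lemma block_end_le b : b < size L -> block_start L b + nth 0 L b <= sumn L.
Proof.
move=> bL; rewrite /block_start -{3}(cat_take_drop b.+1 L) sumn_cat (take_nth 0 bL).
by rewrite sumn_rcons leq_addr.
Qed.

Lemma block_succ_offset b r : b < size L -> r < nth 0 L b ->
  block_last L (block_start L b + r) = (r.+1 == nth 0 L b) /\
  block_succ L (block_start L b + r)
    = block_start L b + (if r.+1 == nth 0 L b then 0 else r.+1).
Proof.
move=> bL rb; rewrite /block_succ /block_last block_of_offset //.
by rewrite -addnS eqn_add2l; case: eqP; rewrite ?addn0.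
Qed.

Lemma block_of_succ i : i < sumn L -> block_of L (block_succ L i) = block_of L i.
Proof.
move=> /block_offsetP[b bL [r rb ->]]; have [_ ->] := block_succ_offset bL rb.
rewrite !block_of_offset //; case: eqP => //; lia.
Qed.

Lemma block_succ_lt i : i < sumn L -> block_succ L i < sumn L.
Proof.
move=> /block_offsetP[b bL [r rb ->]]; have [_ ->] := block_succ_offset bL rb.
by have := block_end_le bL; case: eqP; lia.
Qed.

Lemma block_succ_inj i j : i < sumn L -> j < sumn L ->
  block_succ L i = block_succ L j -> i = j.
Proof.
move=> iL jL eq_succ; have := block_of_succ iL; rewrite eq_succ block_of_succ //.
move: iL jL eq_succ => /block_offsetP[b bL [r rb ->]] /block_offsetP[b' bL' [r' rb' ->]].
rewrite !block_of_offset // => + eq_b; subst b'.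
have [_ ->] := block_succ_offset bL rb; have [_ ->] := block_succ_offset bL rb'.
by case: eqP; case: eqP; lia.
Qed.

End Blocks.

Section CycleTypeRepresentative.
Variables (n : nat) (lam mu : seq nat).
Hypothesis lam_mu : is_bipartition n lam mu.

Let L := lam ++ mu.
Let m := size lam.

Lemma sumn_blocks : sumn L = n.
Proof. by case/and3P: lam_mu => _ _ /eqP; rewrite sumn_cat. Qed.

Lemma block_size_gt0 b : b < size L -> 0 < nth 0 L b.
Proof.
case/and3P: lam_mu => /andP[_ lam_gt0] /andP[_ mu_gt0] _.
by apply/(all_nthP 0); rewrite all_cat lam_gt0.
Qed.

Lemma ord_lt_sumn (i : 'I_n) : i < sumn L.
Proof. by rewrite sumn_blocks. Qed.

Lemma block_start_lt b : b < size L -> block_start L b < n.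
Proof.
by move=> bL; rewrite -sumn_blocks; have := block_end_le bL; have := block_size_gt0 bL; lia.
Qed.

Definition succ_ord (i : 'I_n) : 'I_n := insubd i (block_succ L i).

Lemma succ_ordE i : val (succ_ord i) = block_succ L i.
Proof. by rewrite val_insubd -{2}sumn_blocks block_succ_lt ?ord_lt_sumn. Qed.

Definition flips_sign (i : 'I_n) := block_last L i && (m <= block_of L i).

Lemma type_rep_inj :
  injective (fun x : sT n => (x.1 (+) flips_sign x.2, succ_ord x.2)).
Proof.
move=> [e i] [e' i'] [eq_sign /(congr1 val)]; rewrite !succ_ordE.
move/(block_succ_inj (ord_lt_sumn i) (ord_lt_sumn i'))/val_inj => eq_i.
by rewrite -eq_i in eq_sign *; rewrite (addIb eq_sign).
Qed.

Definition type_rep : {perm sT n} := perm type_rep_inj.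

Lemma type_repE x : type_rep x = (x.1 (+) flips_sign x.2, succ_ord x.2).
Proof. by rewrite permE. Qed.

Lemma type_rep_Bn : type_rep \in Bn n.
Proof. by apply/BnP => -[e i]; rewrite !type_repE /negT /= addNb. Qed.

Section Iterates.
Variables (e : bool) (b : nat) (i : 'I_n).
Hypotheses (bL : b < size L) (i_start : val i = block_start L b).

Lemma type_rep_offset r : r < nth 0 L b ->
  ((type_rep ^+ r) (e, i)).1 = e /\ val ((type_rep ^+ r) (e, i)).2 = block_start L b + r.
Proof.
elim: r => [|r IHr] rb; first by rewrite expg0 perm1 addn0.
have [sgn_r pos_r] := IHr (ltnW rb).
have [last_r succ_r] := block_succ_offset bL (ltnW rb).
rewrite expgSr permM type_repE /= succ_ordE /flips_sign pos_r last_r succ_r.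
by rewrite ltn_eqF // andFb addbF sgn_r addnS.
Qed.

Lemma type_rep_block : (type_rep ^+ nth 0 L b) (e, i) = (e (+) (m <= b), i).
Proof.
have := block_size_gt0 bL; case def_len: (nth 0 L b) => [//|r] _.
have rb : r < nth 0 L b by rewrite def_len.
have [sgn_r pos_r] := type_rep_offset rb; have [last_r succ_r] := block_succ_offset bL rb.
rewrite expgSr permM type_repE /flips_sign pos_r last_r block_of_offset //.
rewrite def_len eqxx sgn_r; congr (_, _); apply: val_inj.
by rewrite succ_ordE pos_r succ_r def_len eqxx addn0 i_start.
Qed.

End Iterates.

Definition block_orbit (e : bool) b : {set sT n} :=
  [set y : sT n | (block_of L y.2 == b) && ((m <= b) || (y.1 == e))].

Lemma type_rep_block_orbit e b :
  {in block_orbit e b, forall y, type_rep y \in block_orbit e b}.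
Proof.
move=> [e' i]; rewrite !inE type_repE succ_ordE block_of_succ ?ord_lt_sumn //=.
case/andP=> /eqP b_i; rewrite b_i eqxx /=; case: leqP => //= lt_b /eqP->.
by rewrite /flips_sign b_i leqNgt lt_b andbF addbF.
Qed.

Lemma porbit_type_rep x : porbit type_rep x = block_orbit x.1 (block_of L x.2).
Proof.
set b := block_of L x.2; have [bL _] := block_ofP (ord_lt_sumn x.2).
pose i0 := Ordinal (block_start_lt bL); pose x0 := (x.1, i0).
have Ox : x \in block_orbit x.1 b by rewrite inE !eqxx orbT.
suff sub_orbit : block_orbit x.1 b \subset porbit type_rep x0.
  have /eqP-> : porbit type_rep x == porbit type_rep x0.
    by rewrite eq_porbit_mem (subsetP sub_orbit).
  apply/eqP; rewrite eqEsubset sub_orbit andbT.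
  apply: porbit_subset (@type_rep_block_orbit _ _).
  by rewrite inE /= block_of_start ?block_size_gt0 // !eqxx orbT.
apply/subsetP => -[e i]; rewrite inE => /andP[/eqP b_i sgn].
have [b' bL' [r rb' def_i]] := block_offsetP (ord_lt_sumn i).
have eq_b : b' = b by rewrite -b_i def_i block_of_offset.
subst b'; rewrite /= in b_i.
have move_to (e' : bool) : ((type_rep ^+ r) (e', i0)) = (e', i).
  have [] := type_rep_offset e' (i := i0) bL (erefl _) rb'.
  case: ((type_rep ^+ r) (e', i0)) => e'' j /= -> pos_r.
  by congr (_, _); apply: val_inj; rewrite /= pos_r def_i.
have [<- | ne] := eqVneq x.1 e; first by rewrite -move_to mem_porbit.
move: sgn; rewrite /= eq_sym (negPf ne) orbF => neg_b; apply/porbitP.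
exists (nth 0 L b + r); rewrite expgD permM type_rep_block // neg_b -move_to.
by move: ne; rewrite addbT; case: (x.1); case: e.
Qed.

Lemma block_orbit_neg e e' b : m <= b -> block_orbit e b = block_orbit e' b.
Proof. by move=> mb; apply/setP => y; rewrite !inE mb. Qed.

Definition block_positions b : {set 'I_n} := [set i : 'I_n | block_of L i == b].

Lemma card_block_positions b : b < size L -> #|block_positions b| = nth 0 L b.
Proof.
move=> bL; pose i0 := Ordinal (block_start_lt bL).
pose pos (r : 'I_(nth 0 L b)) : 'I_n := insubd i0 (block_start L b + r).
have posE r : val (pos r) = block_start L b + r.
  rewrite val_insubd ifT // -sumn_blocks (leq_trans _ (block_end_le bL)) //.
  by rewrite ltn_add2l.
have -> : block_positions b = pos @: setT.
  apply/setP => i; rewrite inE; apply/eqP/imsetP => [b_i | [r _ ->]]; last first.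
    by rewrite posE block_of_offset.
  have [_ /andP[]] := block_ofP (ord_lt_sumn i); rewrite b_i => le_i lt_i.
  have r_lt : i - block_start L b < nth 0 L b by lia.
  by exists (Ordinal r_lt); rewrite ?inE //; apply: val_inj; rewrite posE /=; lia.
rewrite card_imset ?cardsT ?card_ord // => r r' /(congr1 val).
by rewrite !posE => /addnI /val_inj.
Qed.

Lemma card_block_orbit e b : b < size L -> #|block_orbit e b| = ((m <= b).+1 * nth 0 L b)%N.
Proof.
move=> bL; rewrite -card_block_positions //; case: leqP => [mb | bm].
  have -> : block_orbit e b = setX setT (block_positions b).
    by apply/setP => -[e' i]; rewrite !inE mb /= andbT.
  by rewrite cardsX cardsT card_bool.
have -> : block_orbit e b = pair e @: block_positions b.
  apply/setP => -[e' i]; rewrite inE leqNgt bm /=; apply/andP/imsetP => [[b_i /eqP->] | [j]].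
    by exists i; rewrite ?inE.
  by rewrite inE => b_j [-> ->].
by rewrite card_imset ?mul1n // => i j [].
Qed.

Lemma negclosed_block_orbit e b : b < size L -> negclosed (block_orbit e b) = (m <= b).
Proof.
move=> bL; rewrite /negclosed (can_imset_pre _ (@negTK n)); case: leqP => [mb | bm].
  by apply/eqP/setP => y; rewrite !inE mb.
apply/negbTE/eqP => /setP/(_ (e, Ordinal (block_start_lt bL))).
rewrite !inE /= block_of_start ?block_size_gt0 // leqNgt bm !eqxx /=.
by case: e.
Qed.

Lemma chosen_rep_block_orbit e b : b < m -> chosen_rep (block_orbit e b) = ~~ e.
Proof.
move=> bm; have bL : b < size L by rewrite size_cat ltn_addr.
apply/existsP/idP => [[x /andP[Ox /andP[/eqP x1 _]]] | ne].
  by move: Ox; rewrite inE leqNgt bm x1 /= => /andP[_ /eqP<-].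
exists (e, Ordinal (block_start_lt bL)); rewrite inE /= (negPf ne).
rewrite block_of_start ?block_size_gt0 // !eqxx orbT /=.
apply/forall_inP => y; rewrite inE => /andP[/eqP b_y _].
by have [_ /andP[]] := block_ofP (ord_lt_sumn y.2); rewrite b_y.
Qed.

Lemma block_orbit_porbits e b : b < size L -> block_orbit e b \in porbits type_rep.
Proof.
move=> bL; apply/imsetP; exists (e, Ordinal (block_start_lt bL)) => //.
by rewrite porbit_type_rep /= block_of_start ?block_size_gt0.
Qed.

Lemma porbits_type_repP X : X \in porbits type_rep ->
  exists2 b, b < size L & exists e, X = block_orbit e b.
Proof.
case/imsetP=> x _ ->; have [bL _] := block_ofP (ord_lt_sumn x.2).
by exists (block_of L x.2) => //; exists x.1; rewrite porbit_type_rep.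
Qed.

Lemma block_orbit_inj e : {in gtn (size L) &, injective (block_orbit e)}.
Proof.
move=> b b' bL bL' /setP/(_ (e, Ordinal (block_start_lt bL))).
by rewrite !inE /= block_of_start ?block_size_gt0 // !eqxx orbT => /esym/andP[/eqP].
Qed.

Lemma pos_orbits :
  perm_eq [seq X <- enum (porbits type_rep) | ~~ negclosed X && chosen_rep X]
          [seq block_orbit false b | b <- iota 0 m].
Proof.
have m_L b : b < m -> b < size L by move=> bm; rewrite size_cat ltn_addr.
apply: uniq_perm; first by rewrite filter_uniq ?enum_uniq.
  rewrite map_inj_in_uniq ?iota_uniq // => b b'; rewrite !mem_iota /= => bm b'm.
  by apply: block_orbit_inj; rewrite inE m_L.
move=> X; rewrite mem_filter mem_enum; apply/andP/mapP => [[] | [b]].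
  move=> PX /porbits_type_repP[b bL [e defX]]; move: PX.
  rewrite defX negclosed_block_orbit // -ltnNge.
  case/andP=> bm; rewrite chosen_rep_block_orbit // => /negPf->.
  by exists b; rewrite // mem_iota.
rewrite mem_iota /= => bm ->; have bL := m_L b bm.
by rewrite negclosed_block_orbit // chosen_rep_block_orbit // -ltnNge bm block_orbit_porbits.
Qed.

Lemma neg_orbits :
  perm_eq [seq X <- enum (porbits type_rep) | negclosed X]
          [seq block_orbit false b | b <- iota m (size mu)].
Proof.
have mu_L b : b \in iota m (size mu) -> m <= b < size L by rewrite mem_iota size_cat.
apply: uniq_perm; first by rewrite filter_uniq ?enum_uniq.
  rewrite map_inj_in_uniq ?iota_uniq // => b b' /mu_L/andP[_ bL] /mu_L/andP[_ bL'].
  exact: block_orbit_inj.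
move=> X; rewrite mem_filter mem_enum; apply/andP/mapP => [[] | [b /mu_L/andP[mb bL] ->]].
  move=> PX /porbits_type_repP[b bL [e defX]]; move: PX.
  rewrite defX negclosed_block_orbit // => mb.
  by exists b; rewrite ?mem_iota ?mb -?size_cat // (block_orbit_neg _ false).
by rewrite negclosed_block_orbit // block_orbit_porbits.
Qed.

Lemma posCycles_type_rep : posCycles type_rep = lam.
Proof.
case/and3P: lam_mu => /andP[sorted_lam _] _ _.
apply: sort_geq_eq sorted_lam; apply: perm_trans (perm_map _ pos_orbits) _.
suff -> : [seq #|X| | X : {set sT n} <- [seq block_orbit false b | b <- iota 0 m]]
          = lam by [].
rewrite -map_comp -[RHS](mkseq_nth 0 lam); apply/eq_in_map => b.
rewrite mem_iota /= => bm; rewrite card_block_orbit ?size_cat ?ltn_addr //.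
by rewrite leqNgt bm mul1n nth_cat bm.
Qed.

Lemma negCycles_type_rep : negCycles type_rep = mu.
Proof.
case/and3P: lam_mu => _ /andP[sorted_mu _] _.
apply: sort_geq_eq sorted_mu; apply: perm_trans (perm_map _ neg_orbits) _.
suff -> : [seq #|X| %/ 2 | X : {set sT n} <- [seq block_orbit false b | b <- iota m (size mu)]]
          = mu by [].
rewrite -[m]addn0 iotaDl -!map_comp -[RHS](mkseq_nth 0 mu); apply/eq_in_map => b.
rewrite mem_iota /= => b_mu; rewrite card_block_orbit ?size_cat ?ltn_add2l //.
by rewrite leq_addr mulKn // nth_cat ltnNge leq_addr addKn.
Qed.

Lemma type_rep_typeClass : type_rep \in typeClass n lam mu.
Proof. by rewrite inE type_rep_Bn posCycles_type_rep negCycles_type_rep !eqxx. Qed.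

End CycleTypeRepresentative.

Local Open Scope ring_scope.

Theorem proposition5p12 (n : nat) (n_odd : odd n) :
  (forall lam mu : seq nat, is_bipartition n lam mu ->
     GammaB n lam mu = (if odd (size mu) then 0 else 2 * GammaD n lam mu))
  /\ tableSum (Bn n) = 2 * tableSum (Dn n).
Proof.
have defB := Bn_dprod n_odd; have abZ := cycle_abelian (negperm n).
have cardZ : #|<[negperm n]>| = 2%N by rewrite -orderE order_negperm.
split=> [lam mu lam_mu | ]; last by rewrite (tableSum_dprod_abelian defB abZ) cardZ.
have /setIdP[Bw /andP[_ /eqP negw]] := mem_repr _ (type_rep_typeClass lam_mu).
rewrite /GammaB /GammaD (colSum_dprod_abelian defB abZ Bw) cardZ.
by rewrite inDn Bw sgnB_negCycles // negw; case: odd.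
Qed.
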